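(* Let $\beta_1,\beta_2,\gamma,\rho_1,\rho_2>0$, let $\sigma_1,\sigma_2>0$ with $\sigma_1+\sigma_2=1$, let $q\in[0,1]$ and $T>0$. Let $s_0,e_0,i_0,j_0>0$ and $r_0\ge 0$ satisfy $s_0+e_0+i_0+j_0+r_0=1$. Consider the system \[ \begin{aligned} s'&=-s\,(\beta_1 i+\beta_2 j),\\ e'&=s\,(\beta_1 i+\beta_2 j)-\gamma e,\\ i'&=\sigma_1\gamma e-\rho_1 i,\\ j'&=\sigma_2\gamma e-\rho_2 j,\\ r'&=\rho_1 i+(1-q)\rho_2 j,\\ n'&=-q\rho_2 j, \end{aligned} \] on $[0,T]$ with initial conditions $s(0)=s_0$, $e(0)=e_0$, $i(0)=i_0$, $j(0)=j_0$, $r(0)=r_0$, $n(0)=1$. Let $s(t),e(t),i(t),j(t),r(t),n(t)$ be solutions of this system with these initial conditions. Then these solutions are defined on the entire interval $[0,T]$, and for all $t\in(0,T]$ they are positive and bounded. *)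

From Stdlib Require Import Reals.
From Coquelicot Require Import Coquelicot.
Open Scope R_scope.

Definition cont_on_0T (T : R) (f : R -> R) : Prop :=
  forall t, 0 <= t <= T ->
    filterlim f (within (fun x => 0 <= x <= T) (locally t)) (locally (f t)).

Definition is_solution
  (beta1 beta2 gamma rho1 rho2 sigma1 sigma2 q T : R)
  (s0 e0 i0 j0 r0 : R)
  (s e i j r n : R -> R) : Prop :=
  cont_on_0T T s /\ cont_on_0T T e /\ cont_on_0T T i /\
  cont_on_0T T j /\ cont_on_0T T r /\ cont_on_0T T n /\
  (forall t, 0 < t < T ->
     is_derive s t (- s t * (beta1 * i t + beta2 * j t)) /\
     is_derive e t (s t * (beta1 * i t + beta2 * j t) - gamma * e t) /\
     is_derive i t (sigma1 * gamma * e t - rho1 * i t) /\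
     is_derive j t (sigma2 * gamma * e t - rho2 * j t) /\
     is_derive r t (rho1 * i t + (1 - q) * rho2 * j t) /\
     is_derive n t (- q * rho2 * j t)) /\
  s 0 = s0 /\ e 0 = e0 /\ i 0 = i0 /\ j 0 = j0 /\ r 0 = r0 /\ n 0 = 1.

Definition pos_on (T : R) (f : R -> R) : Prop :=
  forall t, 0 < t <= T -> 0 < f t.

Definition bounded_on (T : R) (f : R -> R) : Prop :=
  exists M, forall t, 0 < t <= T -> Rabs (f t) <= M.

From Stdlib Require Import Reals Lra Lia Classical.
From Coquelicot Require Import Coquelicot.
Open Scope R_scope.

(* The total population n = s + e + i + j + r satisfies n' = - q rho2 j, so while the
   compartments are positive it is nonincreasing, hence at most n(0) = 1.  So i, j <= 1,
   and every compartment f obeys a linear lower bound f' >= - K f on that interval; by a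
   Gronwall comparison it cannot reach 0.  Real induction turns this into positivity on all
   of [0, T]; moreover r' > 0 makes r positive for t > 0.

   For existence, clamping s, e, i, j to [0, 1] makes the vector field bounded and globally
   Lipschitz, so Picard iteration converges on [0, T].  By the same a priori bounds the
   resulting solution never leaves the open unit cube, where the clamping is inactive, so it
   solves the original system. *)

Definition clamp (a b x : R) : R := Rmax a (Rmin b x).

Lemma clamp_in a b x : a <= b -> a <= clamp a b x <= b.
Proof. intros. unfold clamp, Rmax, Rmin. repeat destruct Rle_dec; lra. Qed.

Lemma clamp_id a b x : a <= x <= b -> clamp a b x = x.
Proof. intros. unfold clamp, Rmax, Rmin. repeat destruct Rle_dec; lra. Qed.

Lemma clamp_lipschitz a b x y : a <= b -> Rabs (clamp a b x - clamp a b y) <= Rabs (x - y).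
Proof.
  intros. unfold clamp, Rmax, Rmin.
  repeat destruct Rle_dec; unfold Rabs; repeat destruct Rcase_abs; lra.
Qed.

Lemma ball_R x eps y : ball x eps y <-> Rabs (y - x) < eps.
Proof. reflexivity. Qed.

Lemma lipschitz_continuous (f : R -> R) K x :
  (forall y, Rabs (f y - f x) <= K * Rabs (y - x)) -> continuous f x.
Proof.
  intros Hf. apply filterlim_locally. intros [eps Heps].
  assert (HK : 0 < Rabs K + 1) by (pose proof (Rabs_pos K); lra).
  assert (Hd : 0 < eps / (Rabs K + 1)) by (apply Rdiv_lt_0_compat; lra).
  exists (mkposreal _ Hd). intros y Hy. apply ball_R in Hy. apply ball_R; simpl in *.
  apply Rle_lt_trans with (1 := Hf y).
  apply Rle_lt_trans with ((Rabs K + 1) * Rabs (y - x)).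
  - pose proof (Rle_abs K). pose proof (Rabs_pos (y - x)). nra.
  - apply Rmult_lt_compat_l with (r := Rabs K + 1) in Hy; [|lra].
    unfold Rdiv in Hy. rewrite <- Rmult_assoc, Rinv_r_simpl_m in Hy by lra. exact Hy.
Qed.

Lemma continuous_clamp_comp a b (f : R -> R) x : a <= b ->
  continuous_on (fun t => a <= t <= b) f -> continuous (fun t => f (clamp a b t)) x.
Proof.
  intros Hab Hf P HP.
  destruct (Hf _ (clamp_in a b x Hab) P HP) as [eps He].
  exists eps. intros y Hy. apply He.
  - apply ball_R. apply ball_R in Hy.
    eapply Rle_lt_trans; [apply clamp_lipschitz|]; auto.
  - apply clamp_in; auto.
Qed.

Lemma continuous_on_plus D (f g : R -> R) :
  continuous_on D f -> continuous_on D g -> continuous_on D (fun t => f t + g t).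
Proof.
  intros Hf Hg x Dx.
  apply (filterlim_comp_2 f g Rplus (Hf x Dx) (Hg x Dx) (filterlim_plus (f x) (g x))).
Qed.

Lemma continuous_on_opp D (f : R -> R) :
  continuous_on D f -> continuous_on D (fun t => - f t).
Proof.
  intros Hf x Dx. exact (filterlim_comp _ _ _ f Ropp _ _ _ (Hf x Dx) (filterlim_opp (f x))).
Qed.

Lemma continuous_on_minus D (f g : R -> R) :
  continuous_on D f -> continuous_on D g -> continuous_on D (fun t => f t - g t).
Proof. intros Hf Hg. exact (continuous_on_plus D f _ Hf (continuous_on_opp D g Hg)). Qed.

Lemma continuous_on_mult D (f g : R -> R) :
  continuous_on D f -> continuous_on D g -> continuous_on D (fun t => f t * g t).
Proof.
  intros Hf Hg x Dx.
  apply (filterlim_comp_2 f g Rmult (Hf x Dx) (Hg x Dx) (filterlim_mult (f x) (g x))).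
Qed.

Lemma is_derive_eq_val (f : R -> R) x l l' : is_derive f x l -> l = l' -> is_derive f x l'.
Proof. intros H <-. exact H. Qed.

Lemma MVT_on (f df : R -> R) a b : a < b ->
  continuous_on (fun t => a <= t <= b) f ->
  (forall c, a < c < b -> is_derive f c (df c)) ->
  exists c, a < c < b /\ f b - f a = df c * (b - a).
Proof.
  intros Hab Hf Hd.
  (* Stdlib's [MVT] wants two-sided continuity at the endpoints; [clamp] extends [f]. *)
  set (g := fun t => f (clamp a b t)).
  assert (Hg : forall c, a < c < b -> derivable_pt_lim g c (df c)).
  { intros c Hc. apply is_derive_Reals. apply is_derive_ext_loc with f; [|auto].
    apply (locally_interval _ _ (Finite a) (Finite b)); simpl; try tauto.
    intros y Hay Hyb. unfold g. rewrite clamp_id; lra. }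
  assert (pr1 : forall c, a < c < b -> derivable_pt g c)
    by (intros c Hc; exists (df c); apply Hg, Hc).
  assert (pr2 : forall c, a < c < b -> derivable_pt id c) by (intros; apply derivable_pt_id).
  destruct (MVT g id a b pr1 pr2 Hab) as [c [Hc E]].
  - intros c _. apply continuity_pt_filterlim. apply continuous_clamp_comp; [lra | exact Hf].
  - intros c _. apply derivable_continuous_pt, derivable_pt_id.
  - exists c. split; auto.
    rewrite (derive_pt_eq_0 g c (df c) (pr1 c Hc) (Hg c Hc)) in E.
    rewrite (derive_pt_eq_0 id c 1 (pr2 c Hc) (derivable_pt_lim_id c)) in E.
    unfold g, id in E. rewrite !clamp_id in E by lra. lra.
Qed.

Lemma le_of_derive_nonneg (f df : R -> R) a b : a <= b ->
  continuous_on (fun t => a <= t <= b) f ->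
  (forall c, a < c < b -> is_derive f c (df c)) ->
  (forall c, a < c < b -> 0 <= df c) -> f a <= f b.
Proof.
  intros [Hab|<-] Hf Hd Hpos; [|lra].
  destruct (MVT_on f df a b Hab Hf Hd) as [c [Hc E]].
  specialize (Hpos c Hc). nra.
Qed.

Lemma lt_of_derive_pos (f df : R -> R) a b : a < b ->
  continuous_on (fun t => a <= t <= b) f ->
  (forall c, a < c < b -> is_derive f c (df c)) ->
  (forall c, a < c < b -> 0 < df c) -> f a < f b.
Proof.
  intros Hab Hf Hd Hpos.
  destruct (MVT_on f df a b Hab Hf Hd) as [c [Hc E]].
  specialize (Hpos c Hc). nra.
Qed.

Lemma exp_le_exp x y : x <= y -> exp x <= exp y.
Proof. intros [H|<-]; [left; apply exp_increasing, H|lra]. Qed.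

Lemma gronwall_lower_bound (f df : R -> R) K a b : a <= b ->
  continuous_on (fun t => a <= t <= b) f ->
  (forall c, a < c < b -> is_derive f c (df c)) ->
  (forall c, a < c < b -> - K * f c <= df c) ->
  f a * exp (K * (a - b)) <= f b.
Proof.
  intros Hab Hf Hd Hlow.
  assert (Hmono : f a * exp (K * a) <= f b * exp (K * b)).
  { apply (le_of_derive_nonneg (fun t => f t * exp (K * t))
             (fun t => (df t + K * f t) * exp (K * t))); auto.
    - apply continuous_on_mult; auto.
      apply continuous_on_forall. intros x _.
      apply (ex_derive_continuous (fun t => exp (K * t))). auto_derive. auto.
    - intros c Hc. eapply is_derive_eq_val.
      + apply (is_derive_mult f (fun t => exp (K * t))); [auto| |].
        * auto_derive; auto.
        * intros; apply Rmult_comm.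
      + simpl. unfold plus, mult; simpl. ring.
    - intros c Hc. specialize (Hlow c Hc). pose proof (exp_pos (K * c)). nra. }
  replace (K * (a - b)) with (K * a + - (K * b)) by ring.
  rewrite exp_plus, exp_Ropp.
  pose proof (exp_pos (K * b)).
  apply Rmult_le_compat_r with (r := / exp (K * b)) in Hmono; [|left; apply Rinv_0_lt_compat; lra].
  rewrite Rmult_assoc in Hmono. rewrite Rinv_r_simpl_l in Hmono by lra. lra.
Qed.

Lemma pos_of_derive_ge_linear (f df : R -> R) K a b : a <= b ->
  continuous_on (fun t => a <= t <= b) f ->
  (forall c, a < c < b -> is_derive f c (df c)) ->
  (forall c, a < c < b -> - K * f c <= df c) ->
  0 < f a -> 0 < f b.
Proof.
  intros Hab Hf Hd Hlow Ha.
  pose proof (gronwall_lower_bound f df K a b Hab Hf Hd Hlow).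
  pose proof (exp_pos (K * (a - b))). nra.
Qed.

Lemma real_induction a b (Q : R -> Prop) : a <= b -> Q a ->
  (forall t, a < t <= b -> (forall u, a <= u < t -> Q u) -> Q t) ->
  (forall t, a <= t < b -> Q t -> within (fun u => a <= u <= b) (locally t) Q) ->
  forall t, a <= t <= b -> Q t.
Proof.
  intros Hab Qa Hclosed Hopen.
  set (E := fun x => a <= x <= b /\ forall u, a <= u <= x -> Q u).
  assert (Ea : E a).
  { split; [lra|]. intros u Hu. replace u with a by lra. exact Qa. }
  destruct (completeness E) as [m [Hub Hlub]].
  { exists b. intros x [Hx _]. lra. }
  { exists a. exact Ea. }
  assert (Ham : a <= m) by (apply Hub, Ea).
  assert (Hmb : m <= b) by (apply Hlub; intros x [Hx _]; lra).
  assert (Hbelow : forall u, a <= u < m -> Q u).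
  { intros u Hu. apply NNPP. intros HQu.
    assert (m <= u); [|lra].
    apply Hlub. intros x [Hx HQx]. destruct (Rle_lt_dec x u) as [|Hux]; [lra|].
    exfalso. apply HQu, HQx. lra. }
  assert (Em : E m).
  { split; [lra|]. intros u Hu.
    destruct (Req_dec u m) as [->|]; [|apply Hbelow; lra].
    destruct (Req_dec m a) as [->|]; [exact Qa|].
    apply Hclosed; [lra|exact Hbelow]. }
  destruct (Req_dec m b) as [<-|Hmb'].
  { intros t Ht. apply (proj2 Em). lra. }
  exfalso.
  destruct (Hopen m ltac:(lra) (proj2 Em m ltac:(lra))) as [eps Heps].
  set (x := Rmin (m + eps / 2) b).
  assert (Hx : m < x <= m + eps / 2 /\ x <= b).
  { unfold x. pose proof (cond_pos eps).
    split; [split|]; [apply Rmin_case; lra|apply Rmin_l|apply Rmin_r]. }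
  assert (Ex : E x); [|specialize (Hub x Ex); lra].
  split; [lra|]. intros u Hu.
  destruct (Rle_lt_dec u m); [apply Em; lra|].
  apply Heps; [|lra]. apply ball_R. rewrite Rabs_pos_eq by lra. pose proof (cond_pos eps). lra.
Qed.

Lemma is_lim_seq_scal_pow_half C : is_lim_seq (fun n => C * (/2)^n) 0.
Proof.
  replace (Finite 0) with (Rbar_mult C 0) by (simpl; f_equal; ring).
  apply is_lim_seq_scal_l, is_lim_seq_geom. rewrite Rabs_pos_eq; lra.
Qed.

Lemma le_of_le_pow_half a b C : (forall n, a <= b + C * (/2)^n) -> a <= b.
Proof.
  intros H.
  assert (Hlim : is_lim_seq (fun n => b + C * (/2)^n) (b + 0)).
  { apply is_lim_seq_plus'; [apply is_lim_seq_const|apply is_lim_seq_scal_pow_half]. }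
  rewrite Rplus_0_r in Hlim.
  exact (is_lim_seq_le (fun _ => a) _ a b H (is_lim_seq_const a) Hlim).
Qed.

Section GeometricSteps.
Variables (u : nat -> R) (B : R).
Hypothesis steps : forall k, Rabs (u (S k) - u k) <= B * (/2)^k.

Lemma geometric_steps_tail n p :
  Rabs (u (n + p)%nat - u n) <= 2 * B * (/2)^n - 2 * B * (/2)^(n + p).
Proof.
  induction p as [|p IH].
  - rewrite Nat.add_0_r, Rminus_diag, Rabs_R0. lra.
  - rewrite Nat.add_succ_r.
    replace (u (S (n + p)) - u n)
      with ((u (S (n + p)) - u (n + p)%nat) + (u (n + p)%nat - u n)) by ring.
    eapply Rle_trans; [apply Rabs_triang|]. specialize (steps (n + p)%nat). simpl pow. lra.
Qed.

Lemma geometric_steps_bound n p : Rabs (u (n + p)%nat - u n) <= 2 * B * (/2)^n.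
Proof.
  pose proof (geometric_steps_tail n p).
  assert (0 <= B).
  { specialize (steps 0%nat). simpl pow in steps.
    pose proof (Rabs_pos (u 1%nat - u 0%nat)). lra. }
  pose proof (pow_le (/2) (n + p) ltac:(lra)). nra.
Qed.

Lemma geometric_steps_cauchy : ex_finite_lim_seq u.
Proof.
  apply ex_lim_seq_cauchy_corr. intros eps.
  destruct (proj2 (is_lim_seq_spec _ _) (is_lim_seq_scal_pow_half (4 * B)) eps) as [N HN].
  exists N. intros n m Hn Hm. specialize (HN N (le_n N)).
  rewrite Rminus_0_r in HN. pose proof (Rle_abs (4 * B * (/2)^N)).
  pose proof (geometric_steps_bound N (n - N)) as Hn'.
  pose proof (geometric_steps_bound N (m - N)) as Hm'.
  replace (N + (n - N))%nat with n in Hn' by lia. replace (N + (m - N))%nat with m in Hm' by lia.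
  replace (u n - u m) with ((u n - u N) - (u m - u N)) by ring.
  eapply Rle_lt_trans; [apply Rabs_triang|]. rewrite Rabs_Ropp. lra.
Qed.

Lemma geometric_steps_limit_close n : Rabs (real (Lim_seq u) - u n) <= 2 * B * (/2)^n.
Proof.
  destruct geometric_steps_cauchy as [l Hl].
  rewrite (is_lim_seq_unique _ _ Hl). simpl.
  assert (Htail : is_lim_seq (fun p => Rabs (u (p + n)%nat - u n)) (Rabs (l - u n))).
  { apply (is_lim_seq_abs _ (l - u n)), is_lim_seq_minus'; [|apply is_lim_seq_const].
    apply is_lim_seq_incr_n, Hl. }
  refine (is_lim_seq_le _ _ _ _ _ Htail (is_lim_seq_const _)).
  intros p. rewrite Nat.add_comm. apply geometric_steps_bound.
Qed.

End GeometricSteps.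

Lemma ex_RInt_continuous_R (f : R -> R) a b : (forall x, continuous f x) -> ex_RInt f a b.
Proof. intros Hf. apply (ex_RInt_continuous (V := R_CompleteNormedModule)). intros; apply Hf. Qed.

Lemma abs_RInt_le_const_abs (f : R -> R) a b M : (forall x, continuous f x) ->
  (forall x, Rabs (f x) <= M) -> Rabs (RInt f a b) <= M * Rabs (b - a).
Proof.
  intros Hc Hb. rewrite Rmult_comm.
  destruct (Rle_dec a b).
  - rewrite (Rabs_pos_eq (b - a)) by lra.
    apply abs_RInt_le_const; auto. apply ex_RInt_continuous_R, Hc.
  - rewrite <- opp_RInt_swap by (apply ex_RInt_continuous_R, Hc).
    change (Rabs (- RInt f b a) <= Rabs (b - a) * M).
    rewrite Rabs_Ropp, (Rabs_left (b - a)) by lra. replace (- (b - a)) with (a - b) by ring.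
    apply abs_RInt_le_const; [lra| apply ex_RInt_continuous_R, Hc | auto].
Qed.

Lemma RInt_minus_lower (f : R -> R) a b : (forall x, continuous f x) ->
  RInt f 0 a - RInt f 0 b = RInt f b a.
Proof.
  intros Hc. rewrite <- (RInt_Chasles f 0 b a) by apply ex_RInt_continuous_R, Hc.
  change (RInt f 0 b + RInt f b a - RInt f 0 b = RInt f b a). ring.
Qed.

Lemma abs_RInt_le_exp (h : R -> R) C K c : 0 < K -> 0 <= C -> 0 <= c ->
  (forall x, continuous h x) -> (forall t, 0 <= t <= c -> Rabs (h t) <= C * exp (K * t)) ->
  Rabs (RInt h 0 c) <= C / K * exp (K * c).
Proof.
  intros HK HC Hc Hh Hb.
  assert (Hexp : forall x, continuous (fun t => C * exp (K * t)) x).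
  { intros x. apply (ex_derive_continuous (fun t => C * exp (K * t))). auto_derive. auto. }
  assert (HI : RInt (fun t => C * exp (K * t)) 0 c = C / K * exp (K * c) - C / K * exp (K * 0)).
  { apply is_RInt_unique, (is_RInt_derive (fun t => C / K * exp (K * t))).
    - intros x _. auto_derive; [auto|field; lra].
    - intros x _. apply Hexp. }
  eapply Rle_trans; [apply abs_RInt_le; [lra|apply ex_RInt_continuous_R, Hh]|].
  eapply Rle_trans; [apply (RInt_le _ (fun t => C * exp (K * t))); auto|].
  - apply ex_RInt_continuous_R. intros x. apply continuous_Rabs_comp, Hh.
  - apply ex_RInt_continuous_R, Hexp.
  - intros x Hx. apply Hb. lra.
  - rewrite HI, Rmult_0_r, exp_0.
    assert (0 <= C / K) by (apply Rdiv_le_0_compat; lra). lra.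
Qed.

(* States are sequences [nat -> R] and [G m] is the m-th component of the vector field;
   [G_lipschitz] is the Lipschitz condition for the sup norm. *)
Section Picard.
Variables (G : nat -> (nat -> R) -> R) (x0 : nat -> R) (T M L : R).
Hypotheses (HT : 0 < T) (HL : 0 < L)
  (G_bounded : forall m y, Rabs (G m y) <= M)
  (G_lipschitz : forall m y z d,
     (forall k, Rabs (y k - z k) <= d) -> Rabs (G m y - G m z) <= L * d).

Lemma G_bound_nonneg : 0 <= M.
Proof. eapply Rle_trans; [apply Rabs_pos|apply (G_bounded 0 x0)]. Qed.

Lemma G_comp_continuous (y : R -> nat -> R) K m t :
  (forall k u v, Rabs (y u k - y v k) <= K * Rabs (u - v)) ->
  continuous (fun u => G m (y u)) t.
Proof.
  intros Hy. apply lipschitz_continuous with (L * K). intros u.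
  rewrite Rmult_assoc. apply G_lipschitz. intros k. apply Hy.
Qed.

(* Integrating up to [clamp 0 T t] makes every iterate a Lipschitz function on all of R. *)
Fixpoint picard_iter (k : nat) : R -> nat -> R :=
  match k with
  | O => fun _ => x0
  | S k => fun t m => x0 m + RInt (fun u => G m (picard_iter k u)) 0 (clamp 0 T t)
  end.

Lemma picard_iter_lipschitz k m t t' :
  Rabs (picard_iter k t m - picard_iter k t' m) <= M * Rabs (t - t').
Proof.
  revert m t t'. induction k as [|k IH]; intros m t t'; simpl.
  - rewrite Rminus_diag, Rabs_R0. pose proof G_bound_nonneg. pose proof (Rabs_pos (t - t')). nra.
  - assert (Hc : forall x, continuous (fun u => G m (picard_iter k u)) x)
      by (intros; apply G_comp_continuous with M, IH).
    replace (_ - _) with (RInt (fun u => G m (picard_iter k u)) 0 (clamp 0 T t)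
                          - RInt (fun u => G m (picard_iter k u)) 0 (clamp 0 T t')) by ring.
    rewrite RInt_minus_lower by exact Hc.
    eapply Rle_trans; [apply abs_RInt_le_const_abs; auto|].
    apply Rmult_le_compat_l; [apply G_bound_nonneg|]. apply clamp_lipschitz. lra.
Qed.

Lemma picard_iter_continuous k m x : continuous (fun u => G m (picard_iter k u)) x.
Proof. apply G_comp_continuous with M. intros; apply picard_iter_lipschitz. Qed.

(* The weight [exp (2 L t)] makes each Picard step contract by a factor 2. *)
Lemma picard_iter_step k m t :
  Rabs (picard_iter (S k) t m - picard_iter k t m)
    <= M * T * (/2)^k * exp (2 * L * clamp 0 T t).
Proof.
  pose proof G_bound_nonneg as HM.
  revert m t. induction k as [|k IH]; intros m t; pose proof (clamp_in 0 T t ltac:(lra)) as Ht.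
  - simpl. rewrite Rplus_minus_l.
    eapply Rle_trans; [apply abs_RInt_le_const_abs; [intros; apply continuous_const|auto]|].
    rewrite Rminus_0_r, Rabs_pos_eq by lra.
    assert (1 <= exp (2 * L * clamp 0 T t)).
    { rewrite <- exp_0. apply exp_le_exp. apply Rmult_le_pos; lra. }
    assert (M * clamp 0 T t <= M * T) by (apply Rmult_le_compat_l; lra).
    assert (0 <= M * T) by nra. nra.
  - assert (E : picard_iter (S (S k)) t m - picard_iter (S k) t m =
      RInt (fun u => G m (picard_iter (S k) u) - G m (picard_iter k u)) 0 (clamp 0 T t)).
    { simpl picard_iter at 1 2.
      rewrite (RInt_minus (fun u => G m (picard_iter (S k) u)) (fun u => G m (picard_iter k u)))
        by apply ex_RInt_continuous_R, picard_iter_continuous.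
      unfold minus, plus, opp; simpl. ring. }
    rewrite E.
    replace (M * T * (/2)^(S k)) with ((L * (M * T * (/2)^k)) / (2 * L))
      by (simpl pow; field; lra).
    apply abs_RInt_le_exp; try lra.
    + apply Rmult_le_pos; [lra|]. apply Rmult_le_pos; [nra|apply pow_le; lra].
    + intros x. apply (continuous_minus (fun u => G m (picard_iter (S k) u)));
        apply picard_iter_continuous.
    + intros u Hu. rewrite Rmult_assoc. apply G_lipschitz. intros k'.
      rewrite <- (clamp_id 0 T u) at 3 by lra. apply IH.
Qed.

Lemma picard_iter_step_uniform k m t :
  Rabs (picard_iter (S k) t m - picard_iter k t m) <= M * T * exp (2 * L * T) * (/2)^k.
Proof.
  eapply Rle_trans; [apply picard_iter_step|].
  pose proof G_bound_nonneg. pose proof (clamp_in 0 T t ltac:(lra)).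
  assert (exp (2 * L * clamp 0 T t) <= exp (2 * L * T)) by (apply exp_le_exp; nra).
  assert (0 <= M * T * (/2)^k) by (apply Rmult_le_pos; [nra|apply pow_le; lra]).
  replace (M * T * exp (2 * L * T) * (/2)^k) with (M * T * (/2)^k * exp (2 * L * T)) by ring.
  apply Rmult_le_compat_l; auto.
Qed.

Definition picard_limit (t : R) (m : nat) : R := real (Lim_seq (fun k => picard_iter k t m)).

Lemma picard_limit_close t m n :
  Rabs (picard_limit t m - picard_iter n t m) <= 2 * (M * T * exp (2 * L * T)) * (/2)^n.
Proof.
  apply (geometric_steps_limit_close (fun k => picard_iter k t m)).
  intros k. apply picard_iter_step_uniform.
Qed.

Lemma picard_limit_lipschitz m t t' :
  Rabs (picard_limit t m - picard_limit t' m) <= M * Rabs (t - t').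
Proof.
  apply le_of_le_pow_half with (4 * (M * T * exp (2 * L * T))). intros n.
  pose proof (picard_limit_close t m n). pose proof (picard_limit_close t' m n).
  pose proof (picard_iter_lipschitz n m t t').
  replace (picard_limit t m - picard_limit t' m) with
    ((picard_limit t m - picard_iter n t m) + (picard_iter n t m - picard_iter n t' m)
     - (picard_limit t' m - picard_iter n t' m)) by ring.
  eapply Rle_trans; [apply Rabs_triang|]. rewrite Rabs_Ropp.
  eapply Rle_trans; [apply Rplus_le_compat_r, Rabs_triang|]. lra.
Qed.

Lemma picard_limit_continuous m x : continuous (fun u => G m (picard_limit u)) x.
Proof. apply G_comp_continuous with M. intros; apply picard_limit_lipschitz. Qed.

Lemma picard_limit_integral m t : 0 <= t <= T ->
  picard_limit t m = x0 m + RInt (fun u => G m (picard_limit u)) 0 t.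
Proof.
  intros Ht. set (B := M * T * exp (2 * L * T)).
  assert (HB : 0 <= B).
  { pose proof G_bound_nonneg. pose proof (exp_pos (2 * L * T)). unfold B.
    apply Rmult_le_pos; nra. }
  cut (Rabs (picard_limit t m - (x0 m + RInt (fun u => G m (picard_limit u)) 0 t)) <= 0).
  { intros H. apply Rminus_diag_uniq, Rabs_eq_0, Rle_antisym; [exact H|apply Rabs_pos]. }
  apply le_of_le_pow_half with (2 * B + T * (L * (2 * B))). intros n.
  assert (Hint : Rabs (RInt (fun u => G m (picard_iter n u) - G m (picard_limit u)) 0 t)
                   <= (t - 0) * (L * (2 * B * (/2)^n))).
  { apply abs_RInt_le_const; [lra| |].
    - apply ex_RInt_continuous_R. intros x.
      apply (continuous_minus (fun u => G m (picard_iter n u))).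
      + apply picard_iter_continuous.
      + apply picard_limit_continuous.
    - intros u _. apply G_lipschitz. intros k. rewrite <- Rabs_Ropp, Ropp_minus_distr.
      apply picard_limit_close. }
  replace (picard_limit t m - (x0 m + RInt (fun u => G m (picard_limit u)) 0 t)) with
    ((picard_limit t m - picard_iter (S n) t m)
     + RInt (fun u => G m (picard_iter n u) - G m (picard_limit u)) 0 t).
  2:{ simpl picard_iter. rewrite clamp_id by lra.
      rewrite (RInt_minus (fun u => G m (picard_iter n u)) (fun u => G m (picard_limit u))).
      - unfold minus, plus, opp; simpl. ring.
      - apply ex_RInt_continuous_R, picard_iter_continuous.
      - apply ex_RInt_continuous_R, picard_limit_continuous. }
  eapply Rle_trans; [apply Rabs_triang|].
  pose proof (picard_limit_close t m (S n)) as Hclose. simpl pow in Hclose. fold B in Hclose.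
  pose proof (pow_le (/2) n ltac:(lra)).
  assert ((t - 0) * (L * (2 * B * (/2)^n)) <= T * (L * (2 * B * (/2)^n))).
  { apply Rmult_le_compat_r; [|lra]. apply Rmult_le_pos; [lra|]. nra. }
  nra.
Qed.

Theorem picard_lindelof : exists y : R -> nat -> R,
  (forall m t t', Rabs (y t m - y t' m) <= M * Rabs (t - t')) /\
  (forall m, y 0 m = x0 m) /\
  (forall m t, 0 < t < T -> is_derive (fun u => y u m) t (G m (y t))).
Proof.
  exists picard_limit. split; [|split].
  - apply picard_limit_lipschitz.
  - intros m. rewrite (picard_limit_integral m 0) by lra. rewrite RInt_point.
    change (x0 m + 0 = x0 m). ring.
  - intros m t Ht.
    apply is_derive_ext_loc with (fun u => x0 m + RInt (fun u => G m (picard_limit u)) 0 u).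
    + apply (locally_interval _ _ (Finite 0) (Finite T)); simpl; try tauto.
      intros u H0u HuT. symmetry. apply picard_limit_integral. lra.
    + eapply is_derive_eq_val.
      * apply (is_derive_plus (fun _ => x0 m) (fun b => RInt _ 0 b)).
        -- apply is_derive_const.
        -- apply (is_derive_RInt (fun u => G m (picard_limit u)) _ 0);
             [|apply picard_limit_continuous].
           apply filter_forall. intros b. apply (RInt_correct (V := R_CompleteNormedModule)).
           apply ex_RInt_continuous_R, picard_limit_continuous.
      * change (0 + G m (picard_limit t) = G m (picard_limit t)). ring.
Qed.

End Picard.

Lemma abs_mul_sub_le a b u v d du U : 0 <= b <= 1 -> 0 <= u <= U ->
  Rabs (a - b) <= d -> Rabs (u - v) <= du -> Rabs (a * u - b * v) <= U * d + du.
Proof.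
  intros Hb Hu Hab Huv.
  replace (a * u - b * v) with ((a - b) * u + b * (u - v)) by ring.
  eapply Rle_trans; [apply Rabs_triang|].
  rewrite !Rabs_mult, (Rabs_pos_eq u), (Rabs_pos_eq b) by lra.
  pose proof (Rabs_pos (a - b)). pose proof (Rabs_pos (u - v)). nra.
Qed.

Lemma abs_lin_comb_le p p' x x' d : 0 <= p -> 0 <= p' ->
  Rabs x <= d -> Rabs x' <= d -> Rabs (p * x + p' * x') <= (p + p') * d.
Proof.
  intros Hp Hp' Hx Hx'. eapply Rle_trans; [apply Rabs_triang|].
  rewrite !Rabs_mult, (Rabs_pos_eq p), (Rabs_pos_eq p') by lra. nra.
Qed.

Lemma incidence_lipschitz b1 b2 s i j s' i' j' d : 0 <= b1 -> 0 <= b2 ->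
  0 <= s' <= 1 -> 0 <= i <= 1 -> 0 <= j <= 1 ->
  Rabs (s - s') <= d -> Rabs (i - i') <= d -> Rabs (j - j') <= d ->
  Rabs (s * (b1 * i + b2 * j) - s' * (b1 * i' + b2 * j')) <= 2 * (b1 + b2) * d.
Proof.
  intros Hb1 Hb2 Hs' Hi Hj Hds Hdi Hdj.
  replace (2 * (b1 + b2) * d) with ((b1 + b2) * d + (b1 + b2) * d) by ring.
  apply abs_mul_sub_le; [lra|split; nra|auto|].
  replace (_ - _) with (b1 * (i - i') + b2 * (j - j')) by ring.
  apply abs_lin_comb_le; auto.
Qed.

Lemma cont_on_0T_restrict T t f : t <= T -> cont_on_0T T f ->
  continuous_on (fun u => 0 <= u <= t) f.
Proof. intros HtT. apply continuous_on_subset. intros u Hu. lra. Qed.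

Section Model.
Variables (beta1 beta2 gamma rho1 rho2 sigma1 sigma2 q s0 e0 i0 j0 r0 : R).
Hypotheses (Hb1 : 0 < beta1) (Hb2 : 0 < beta2) (Hg : 0 < gamma)
  (Hr1 : 0 < rho1) (Hr2 : 0 < rho2)
  (Hs1 : 0 < sigma1) (Hs2 : 0 < sigma2) (Hsig : sigma1 + sigma2 = 1) (Hq : 0 <= q <= 1)
  (Hs0 : 0 < s0) (He0 : 0 < e0) (Hi0 : 0 < i0) (Hj0 : 0 < j0) (Hr0 : 0 <= r0)
  (Hsum : s0 + e0 + i0 + j0 + r0 = 1).

Section Positivity.
Variables (T : R) (s e i j r n : R -> R).
Hypothesis HT : 0 < T.
Hypothesis Hsol : is_solution beta1 beta2 gamma rho1 rho2 sigma1 sigma2 q T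
                    s0 e0 i0 j0 r0 s e i j r n.

Lemma solution_total_eq t : 0 <= t <= T -> n t = s t + e t + i t + j t + r t.
Proof.
  destruct Hsol as (cs & ce & ci & cj & cr & cn & Hder & E0s & E0e & E0i & E0j & E0r & E0n).
  intros Ht. destruct (Req_dec t 0) as [->|Ht0]; [rewrite E0s, E0e, E0i, E0j, E0r, E0n; lra|].
  set (h := fun u => n u - (s u + e u + i u + j u + r u)).
  assert (Hcont : continuous_on (fun u => 0 <= u <= t) h).
  { assert (HC : forall f, cont_on_0T T f -> continuous_on (fun u => 0 <= u <= t) f)
      by (intros f; apply cont_on_0T_restrict; lra).
    apply continuous_on_minus; [auto|].
    do 4 (apply continuous_on_plus; [|auto]). auto. }
  destruct (MVT_on h (fun _ => 0) 0 t ltac:(lra) Hcont) as [c [_ Hc]].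
  - intros c Hc. destruct (Hder c ltac:(lra)) as (Ds & De & Di & Dj & Dr & Dn).
    eapply is_derive_eq_val.
    + apply (is_derive_minus n); [exact Dn|].
      do 4 (apply (is_derive_plus (V := R_NormedModule)); [|eassumption]). eassumption.
    + unfold minus, plus, opp; simpl. replace sigma2 with (1 - sigma1) by lra. ring.
  - unfold h in Hc. rewrite E0s, E0e, E0i, E0j, E0r, E0n in Hc. lra.
Qed.

Lemma solution_monotone_r_n t : 0 < t <= T ->
  (forall u, 0 < u < t -> 0 < i u /\ 0 < j u) -> r 0 < r t /\ n t <= n 0.
Proof.
  destruct Hsol as (cs & ce & ci & cj & cr & cn & Hder & _).
  intros Ht Hij. split.
  - apply (lt_of_derive_pos r (fun c => rho1 * i c + (1 - q) * rho2 * j c)); try lra.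
    + apply cont_on_0T_restrict with T; tauto.
    + intros c Hc. apply (Hder c ltac:(lra)).
    + intros c Hc. destruct (Hij c Hc). assert (0 <= (1 - q) * rho2) by nra. nra.
  - cut (- n 0 <= - n t); [lra|].
    apply (le_of_derive_nonneg (fun u => - n u) (fun c => q * rho2 * j c)); try lra.
    + apply continuous_on_opp, cont_on_0T_restrict with T; tauto.
    + intros c Hc. eapply is_derive_eq_val.
      * apply (is_derive_opp (V := R_NormedModule) n), (Hder c ltac:(lra)).
      * unfold opp; simpl. ring.
    + intros c Hc. destruct (Hij c Hc). assert (0 <= q * rho2) by nra. nra.
Qed.

Lemma solution_compartments_pos t : 0 <= t <= T ->
  0 < s t /\ 0 < e t /\ 0 < i t /\ 0 < j t.
Proof.
  pose proof Hsol as (cs & ce & ci & cj & cr & cn & Hder & E0s & E0e & E0i & E0j & E0r & E0n).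
  revert t. apply real_induction; [lra|rewrite E0s, E0e, E0i, E0j; tauto| |].
  - intros t Ht Hbelow.
    assert (HC : forall f, cont_on_0T T f -> continuous_on (fun u => 0 <= u <= t) f)
      by (intros f; apply cont_on_0T_restrict; lra).
    assert (Hpos : forall c, 0 < c < t -> 0 < s c /\ 0 < e c /\ 0 < i c /\ 0 < j c)
      by (intros c Hc; apply Hbelow; lra).
    (* The conservation law caps the infectious classes, which bounds the decay rate of s. *)
    assert (Hle1 : forall c, 0 < c < t -> i c <= 1 /\ j c <= 1).
    { intros c Hc. destruct (solution_monotone_r_n c ltac:(lra)) as [Hr Hn].
      { intros u Hu. pose proof (Hpos u ltac:(lra)). tauto. }
      rewrite (solution_total_eq c), (solution_total_eq 0), E0s, E0e, E0i, E0j, E0r in Hn by lra.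
      pose proof (Hpos c Hc). lra. }
    split; [|split; [|split]].
    + apply (pos_of_derive_ge_linear s (fun c => - s c * (beta1 * i c + beta2 * j c))
               (beta1 + beta2) 0 t);
        [lra|auto|intros c Hc; apply (Hder c); lra| |lra].
      intros c Hc. destruct (Hpos c Hc) as (? & ? & ? & ?), (Hle1 c Hc).
      assert (0 <= s c * (beta1 * (1 - i c) + beta2 * (1 - j c))) by (apply Rmult_le_pos; nra).
      lra.
    + apply (pos_of_derive_ge_linear e (fun c => s c * (beta1 * i c + beta2 * j c) - gamma * e c)
               gamma 0 t);
        [lra|auto|intros c Hc; apply (Hder c); lra| |lra].
      intros c Hc. destruct (Hpos c Hc) as (? & ? & ? & ?).
      assert (0 <= s c * (beta1 * i c + beta2 * j c)) by (apply Rmult_le_pos; nra). lra.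
    + apply (pos_of_derive_ge_linear i (fun c => sigma1 * gamma * e c - rho1 * i c) rho1 0 t);
        [lra|auto|intros c Hc; apply (Hder c); lra| |lra].
      intros c Hc. destruct (Hpos c Hc) as (? & ? & ? & ?).
      assert (0 <= sigma1 * gamma * e c) by (apply Rmult_le_pos; nra). lra.
    + apply (pos_of_derive_ge_linear j (fun c => sigma2 * gamma * e c - rho2 * j c) rho2 0 t);
        [lra|auto|intros c Hc; apply (Hder c); lra| |lra].
      intros c Hc. destruct (Hpos c Hc) as (? & ? & ? & ?).
      assert (0 <= sigma2 * gamma * e c) by (apply Rmult_le_pos; nra). lra.
  - intros t Ht (Hst & Het & Hit & Hjt). assert (Dt : 0 <= t <= T) by lra.
    repeat apply filter_and;
      [apply (cs t Dt) | apply (ce t Dt) | apply (ci t Dt) | apply (cj t Dt)];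
      apply (open_gt 0); assumption.
Qed.

Lemma solution_invariants t : 0 < t <= T ->
  (0 < s t /\ 0 < e t /\ 0 < i t /\ 0 < j t /\ 0 < r t) /\
  n t = s t + e t + i t + j t + r t /\ n t <= 1.
Proof.
  pose proof Hsol as (_ & _ & _ & _ & _ & _ & _ & _ & _ & _ & _ & E0r & E0n).
  intros Ht. destruct (solution_compartments_pos t ltac:(lra)) as (? & ? & ? & ?).
  destruct (solution_monotone_r_n t Ht) as [Hr Hn].
  { intros u Hu. pose proof (solution_compartments_pos u ltac:(lra)). tauto. }
  rewrite E0r in Hr. rewrite E0n in Hn.
  split; [repeat split; lra|]. split; [apply solution_total_eq; lra|exact Hn].
Qed.

Lemma solution_pos_bounded :
  (pos_on T s /\ pos_on T e /\ pos_on T i /\ pos_on T j /\ pos_on T r /\ pos_on T n) /\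
  (bounded_on T s /\ bounded_on T e /\ bounded_on T i /\ bounded_on T j /\
   bounded_on T r /\ bounded_on T n).
Proof.
  assert (Hunit : forall f, (forall t, 0 < t <= T -> 0 < f t <= 1) -> pos_on T f /\ bounded_on T f).
  { intros f Hf. split; [intros t Ht; apply Hf, Ht|].
    exists 1. intros t Ht. apply Rabs_le. pose proof (Hf t Ht). lra. }
  destruct (Hunit s), (Hunit e), (Hunit i), (Hunit j), (Hunit r), (Hunit n);
    try (intros t Ht; pose proof (solution_invariants t Ht); lra); tauto.
Qed.

End Positivity.

(* Coordinates 0, ..., 4 of the state are s, e, i, j, r; n is recovered as their sum. *)
Definition clamped_seijr_field (m : nat) (y : nat -> R) : R :=
  let s := clamp 0 1 (y 0%nat) in let e := clamp 0 1 (y 1%nat) in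
  let i := clamp 0 1 (y 2%nat) in let j := clamp 0 1 (y 3%nat) in
  match m with
  | 0 => - s * (beta1 * i + beta2 * j)
  | 1 => s * (beta1 * i + beta2 * j) - gamma * e
  | 2 => sigma1 * gamma * e - rho1 * i
  | 3 => sigma2 * gamma * e - rho2 * j
  | 4 => rho1 * i + (1 - q) * rho2 * j
  | _ => 0
  end.

Lemma clamped_seijr_field_bounded m y :
  Rabs (clamped_seijr_field m y) <= beta1 + beta2 + gamma + rho1 + rho2.
Proof.
  unfold clamped_seijr_field.
  pose proof (clamp_in 0 1 (y 0%nat) ltac:(lra)). pose proof (clamp_in 0 1 (y 1%nat) ltac:(lra)).
  pose proof (clamp_in 0 1 (y 2%nat) ltac:(lra)). pose proof (clamp_in 0 1 (y 3%nat) ltac:(lra)).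
  set (s := clamp 0 1 (y 0%nat)) in *. set (e := clamp 0 1 (y 1%nat)) in *.
  set (i := clamp 0 1 (y 2%nat)) in *. set (j := clamp 0 1 (y 3%nat)) in *.
  assert (0 <= beta1 * i + beta2 * j <= beta1 + beta2) by (split; nra).
  assert (0 <= s * (beta1 * i + beta2 * j) <= beta1 + beta2) by (split; nra).
  assert (0 <= sigma1 * e <= 1) by (split; nra).
  assert (0 <= sigma2 * e <= 1) by (split; nra).
  assert (0 <= (1 - q) * j <= 1) by (split; nra).
  assert (0 <= sigma1 * gamma * e <= gamma) by (split; nra).
  assert (0 <= sigma2 * gamma * e <= gamma) by (split; nra).
  assert (0 <= (1 - q) * rho2 * j <= rho2) by (split; nra).
  assert (0 <= gamma * e <= gamma) by (split; nra).
  assert (0 <= rho1 * i <= rho1) by (split; nra).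
  assert (0 <= rho2 * j <= rho2) by (split; nra).
  destruct m as [|[|[|[|[|m]]]]]; apply Rabs_le; lra.
Qed.

Lemma clamped_seijr_field_lipschitz m y z d : (forall k, Rabs (y k - z k) <= d) ->
  Rabs (clamped_seijr_field m y - clamped_seijr_field m z)
    <= 2 * (beta1 + beta2 + gamma + rho1 + rho2) * d.
Proof.
  intros Hd. unfold clamped_seijr_field.
  assert (Hc : forall k, Rabs (clamp 0 1 (y k) - clamp 0 1 (z k)) <= d)
    by (intros k; eapply Rle_trans; [apply clamp_lipschitz; lra|apply Hd]).
  assert (Hc' : forall k, Rabs (clamp 0 1 (z k) - clamp 0 1 (y k)) <= d)
    by (intros k; rewrite Rabs_minus_sym; apply Hc).
  assert (Hd0 : 0 <= d) by (eapply Rle_trans; [apply Rabs_pos|apply (Hd 0%nat)]).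
  assert (Hin : forall x, 0 <= clamp 0 1 x <= 1) by (intros; apply clamp_in; lra).
  assert (Hcoef : 0 <= sigma1 * gamma <= gamma /\ 0 <= sigma2 * gamma <= gamma /\
                  0 <= (1 - q) * rho2 <= rho2) by (repeat split; nra).
  assert (Hinc : Rabs
      (clamp 0 1 (y 0%nat) * (beta1 * clamp 0 1 (y 2%nat) + beta2 * clamp 0 1 (y 3%nat))
       - clamp 0 1 (z 0%nat) * (beta1 * clamp 0 1 (z 2%nat) + beta2 * clamp 0 1 (z 3%nat)))
      <= 2 * (beta1 + beta2) * d)
    by (apply incidence_lipschitz; auto; lra).
  pose proof (Hc 1%nat). pose proof (Hc' 1%nat). pose proof (Hc 2%nat).
  pose proof (Hc' 2%nat). pose proof (Hc 3%nat). pose proof (Hc' 3%nat).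
  set (s := clamp 0 1 (y 0%nat)) in *. set (e := clamp 0 1 (y 1%nat)) in *.
  set (i := clamp 0 1 (y 2%nat)) in *. set (j := clamp 0 1 (y 3%nat)) in *.
  set (s' := clamp 0 1 (z 0%nat)) in *. set (e' := clamp 0 1 (z 1%nat)) in *.
  set (i' := clamp 0 1 (z 2%nat)) in *. set (j' := clamp 0 1 (z 3%nat)) in *.
  destruct m as [|[|[|[|[|m]]]]].
  - replace (_ - _) with (- (s * (beta1 * i + beta2 * j) - s' * (beta1 * i' + beta2 * j')))
      by ring.
    rewrite Rabs_Ropp. nra.
  - replace (_ - _) with ((s * (beta1 * i + beta2 * j) - s' * (beta1 * i' + beta2 * j'))
                          + gamma * (e' - e)) by ring.
    eapply Rle_trans; [apply Rabs_triang|]. rewrite Rabs_mult, (Rabs_pos_eq gamma) by lra. nra.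
  - replace (_ - _) with (sigma1 * gamma * (e - e') + rho1 * (i' - i)) by ring.
    eapply Rle_trans; [apply abs_lin_comb_le with (d := d); auto; lra|].
    apply Rmult_le_compat_r; lra.
  - replace (_ - _) with (sigma2 * gamma * (e - e') + rho2 * (j' - j)) by ring.
    eapply Rle_trans; [apply abs_lin_comb_le with (d := d); auto; lra|].
    apply Rmult_le_compat_r; lra.
  - replace (_ - _) with (rho1 * (i - i') + (1 - q) * rho2 * (j - j')) by ring.
    eapply Rle_trans; [apply abs_lin_comb_le with (d := d); auto; lra|].
    apply Rmult_le_compat_r; lra.
  - rewrite Rminus_diag, Rabs_R0. nra.
Qed.

Definition initial_state (m : nat) : R :=
  match m with 0 => s0 | 1 => e0 | 2 => i0 | 3 => j0 | 4 => r0 | _ => 0 end.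

Section ClampedSolution.
Variables (T K : R) (y : R -> nat -> R).
Hypotheses (HT : 0 < T)
  (y_lipschitz : forall m t t', Rabs (y t m - y t' m) <= K * Rabs (t - t'))
  (y_init : forall m, y 0 m = initial_state m)
  (y_derive : forall m t, 0 < t < T -> is_derive (fun u => y u m) t (clamped_seijr_field m (y t))).

Definition in_unit_cube (w : nat -> R) : Prop :=
  0 < w 0%nat < 1 /\ 0 < w 1%nat < 1 /\ 0 < w 2%nat < 1 /\ 0 < w 3%nat < 1.

Lemma clamped_solution_is_solution t : 0 < t <= T ->
  (forall u, 0 < u < t -> in_unit_cube (y u)) ->
  is_solution beta1 beta2 gamma rho1 rho2 sigma1 sigma2 q t s0 e0 i0 j0 r0
    (fun u => y u 0%nat) (fun u => y u 1%nat) (fun u => y u 2%nat) (fun u => y u 3%nat)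
    (fun u => y u 4%nat) (fun u => y u 0%nat + y u 1%nat + y u 2%nat + y u 3%nat + y u 4%nat).
Proof.
  intros Ht Hcube.
  assert (Hc : forall m, cont_on_0T t (fun u => y u m)).
  { intros m. apply continuous_on_forall. intros u _.
    apply lipschitz_continuous with K. intros v. apply y_lipschitz. }
  assert (Hd : forall m u, 0 < u < t -> is_derive (fun u => y u m) u (clamped_seijr_field m (y u)))
    by (intros m u Hu; apply y_derive; lra).
  do 5 (split; [apply Hc|]).
  split; [exact (continuous_on_plus _ _ _ (continuous_on_plus _ _ _ (continuous_on_plus _ _ _
    (continuous_on_plus _ _ _ (Hc 0%nat) (Hc 1%nat)) (Hc 2%nat)) (Hc 3%nat)) (Hc 4%nat))|].
  split.
  - intros u Hu. destruct (Hcube u Hu) as (H0 & H1 & H2 & H3).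
    pose proof (Hd 0%nat u Hu) as D0. pose proof (Hd 1%nat u Hu) as D1.
    pose proof (Hd 2%nat u Hu) as D2. pose proof (Hd 3%nat u Hu) as D3.
    pose proof (Hd 4%nat u Hu) as D4.
    unfold clamped_seijr_field in D0, D1, D2, D3, D4.
    repeat match goal with
           | D : context [clamp 0 1 ?x] |- _ => rewrite (clamp_id 0 1 x) in D by lra
           end.
    do 5 (split; [assumption|]).
    eapply is_derive_eq_val.
    + do 4 (apply (is_derive_plus (V := R_NormedModule)); [|eassumption]). eassumption.
    + unfold plus; simpl. replace sigma2 with (1 - sigma1) by lra. ring.
  - rewrite !y_init. simpl. repeat split; lra.
Qed.

Lemma clamped_solution_in_unit_cube t : 0 <= t <= T -> in_unit_cube (y t).
Proof.
  assert (Hc : forall m u, continuous (fun v => y v m) u)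
    by (intros m u; apply lipschitz_continuous with K; intros; apply y_lipschitz).
  revert t. apply real_induction; [lra| | |].
  - unfold in_unit_cube. rewrite !y_init. simpl. repeat split; lra.
  - intros t Ht Hbelow.
    pose proof (clamped_solution_is_solution t Ht (fun u Hu => Hbelow u ltac:(lra))) as Hsol.
    destruct (solution_invariants t _ _ _ _ _ _ ltac:(lra) Hsol t ltac:(lra))
      as ((? & ? & ? & ? & ?) & Hn & Hn1).
    unfold in_unit_cube. repeat split; lra.
  - intros t Ht Hcube.
    assert (Hnear : forall m, 0 < y t m < 1 ->
              within (fun u => 0 <= u <= T) (locally t) (fun u => 0 < y u m < 1)).
    { intros m Hm.
      apply (filterlim_filter_le_1 _ (filter_le_within _) (Hc m t) (fun z => 0 < z < 1)).
      apply (locally_interval _ _ (Finite 0) (Finite 1)); simpl; tauto. }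
    destruct Hcube as (H0 & H1 & H2 & H3).
    apply filter_and; [apply Hnear, H0|]. apply filter_and; [apply Hnear, H1|].
    apply filter_and; [apply Hnear, H2|apply Hnear, H3].
Qed.

End ClampedSolution.

Theorem seijrn_solution_exists T : 0 < T ->
  exists s e i j r n : R -> R,
    is_solution beta1 beta2 gamma rho1 rho2 sigma1 sigma2 q T s0 e0 i0 j0 r0 s e i j r n.
Proof.
  intros HT. set (K := beta1 + beta2 + gamma + rho1 + rho2).
  destruct (picard_lindelof clamped_seijr_field initial_state T K (2 * K) HT ltac:(unfold K; lra)
              clamped_seijr_field_bounded clamped_seijr_field_lipschitz)
    as (y & Hlip & Hinit & Hder).
  exists (fun u => y u 0%nat), (fun u => y u 1%nat), (fun u => y u 2%nat), (fun u => y u 3%nat),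
    (fun u => y u 4%nat), (fun u => y u 0%nat + y u 1%nat + y u 2%nat + y u 3%nat + y u 4%nat).
  apply (clamped_solution_is_solution T K y); auto; [lra|].
  intros u Hu. apply (clamped_solution_in_unit_cube T K y); auto. lra.
Qed.

End Model.

Theorem lemma1
  (beta1 beta2 gamma rho1 rho2 sigma1 sigma2 q T s0 e0 i0 j0 r0 : R)
  (Hb1 : 0 < beta1) (Hb2 : 0 < beta2) (Hg : 0 < gamma)
  (Hr1 : 0 < rho1) (Hr2 : 0 < rho2)
  (Hs1 : 0 < sigma1) (Hs2 : 0 < sigma2) (Hsig : sigma1 + sigma2 = 1)
  (Hq : 0 <= q <= 1) (HT : 0 < T)
  (Hs0 : 0 < s0) (He0 : 0 < e0) (Hi0 : 0 < i0) (Hj0 : 0 < j0) (Hr0 : 0 <= r0)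
  (Hsum : s0 + e0 + i0 + j0 + r0 = 1) :
  (exists s e i j r n : R -> R,
     is_solution beta1 beta2 gamma rho1 rho2 sigma1 sigma2 q T
                 s0 e0 i0 j0 r0 s e i j r n) /\
  (forall s e i j r n : R -> R,
     is_solution beta1 beta2 gamma rho1 rho2 sigma1 sigma2 q T
                 s0 e0 i0 j0 r0 s e i j r n ->
     (pos_on T s /\ pos_on T e /\ pos_on T i /\ pos_on T j /\
      pos_on T r /\ pos_on T n) /\
     (bounded_on T s /\ bounded_on T e /\ bounded_on T i /\ bounded_on T j /\
      bounded_on T r /\ bounded_on T n)).
Proof.
  split.
  - eapply seijrn_solution_exists; eassumption.
  - intros s e i j r n Hsol.
    apply (solution_pos_bounded beta1 beta2 gamma rho1 rho2 sigma1 sigma2 q s0 e0 i0 j0 r0);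
      assumption.
Qed.
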